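(* For integers $1\le N\le 50$, a $PCS_3^N$ exists if and only if $N\in\{1,4,8,12,16,24,28,32,36,40,44,48\}$.
   Context: A binary sequence of length $N$ is a sequence $a=(a(0),\dots,a(N-1))$ with each $a(i)\in\{+1,-1\}$. Its periodic autocorrelation function is $\tilde\varphi_a(i)=\sum_{j=0}^{N-1}a(j)a(i+j \bmod N)$ for $0\le i<N$. A family $a_1,\dots,a_p$ of binary sequences, all of length $N$, is a $PCS_p^N$ (periodic complementary set) if $\sum_{k=1}^p\tilde\varphi_{a_k}(i)=0$ for all $0<i<N$. The sequences in a family need not be distinct. *)

From HB Require Import structures.
From mathcomp Require Import all_boot all_order all_algebra.
Set Implicit Arguments. Unset Strict Implicit. Unset Printing Implicit Defensive.
Import Order.TTheory GRing.Theory Num.Theory.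
Local Open Scope ring_scope.

Definition binary_seq (N : nat) (a : 'I_N -> int) : Prop :=
  forall j : 'I_N, a j = 1 \/ a j = -1.

(* The index (i + j) mod N as an element of 'I_N (N > 0 since j : 'I_N). *)
Definition shift_idx (N : nat) (i : nat) (j : 'I_N) : 'I_N :=
  Ordinal (ltn_pmod (i + j) (leq_ltn_trans (leq0n j) (ltn_ord j))).

Definition pacf (N : nat) (a : 'I_N -> int) (i : nat) : int :=
  \sum_(j < N) a j * a (shift_idx i j).

Definition is_PCS (p N : nat) (a : 'I_p -> 'I_N -> int) : Prop :=
  (forall k : 'I_p, binary_seq (a k)) /\
  (forall i : nat, (0 < i)%N -> (i < N)%N -> \sum_(k < p) pacf (a k) i = 0).

From HB Require Import structures.
From mathcomp Require Import all_boot all_order all_algebra.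
Set Implicit Arguments. Unset Strict Implicit. Unset Printing Implicit Defensive.
Import Order.TTheory GRing.Theory Num.Theory.
Local Open Scope ring_scope.

(* Necessity rests on two identities for a +-1 sequence a of length N.
   (1) Writing a(j) = 1 - 2 x(j) with x(j) in {0,1} and using that the linear
       terms cancel under a cyclic shift, every autocorrelation value is
       congruent to N modulo 4.  Adding the p autocorrelations of a PCS_p^N at
       shift 1 gives 0, so 4 divides p N as soon as N > 1.
   (2) Summing the autocorrelation over all shifts gives the square of the sum
       of the entries, and the shift-0 value is N; so for a PCS_p^N the squared
       entry sums of the p sequences add up to p N.
   For p = 3, (1) forces 4 | N when N > 1, and (2) rules out N = 20 because
   60 is not a sum of three squares.
   Sufficiency is by explicit certificates: a boolean checker on lists of
   rows, which evaluates by computation, is proved sound for is_PCS and run on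
   one triple of sequences for each admissible length. *)

Section Autocorrelation.
Variables (N : nat) (a : 'I_N -> int).

Lemma sum_shift (i : nat) (f : 'I_N -> int) :
  \sum_j f (shift_idx i j) = \sum_j f j.
Proof.
symmetry; apply: reindex_inj => j1 j2 /(congr1 val) /= /eqP.
by rewrite eqn_modDl !modn_small // => /eqP; apply: val_inj.
Qed.

Lemma sum_pacf : \sum_(i < N) pacf a i = (\sum_j a j) ^+ 2.
Proof.
rewrite /pacf exchange_big /= expr2 mulr_suml; apply: eq_bigr => j _.
rewrite -mulr_sumr -(sum_shift j a); congr (_ * _).
by apply: eq_bigr => i _; congr a; apply: val_inj; rewrite /= addnC.
Qed.

Hypothesis a_binary : binary_seq a.

(* At shift 0 every term is a(j)^2 = 1. *)
Lemma pacf0 : pacf a 0 = N%:R.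
Proof.
rewrite /pacf (eq_bigr (fun _ => 1)) ?sumr_const ?card_ord // => j _.
have -> : shift_idx 0 j = j by apply: val_inj; rewrite /= add0n modn_small.
by case: (a_binary j) => ->.
Qed.

(* Indicator of the -1 entries: a(j) = 1 - 2 neg_ind(j). *)
Definition neg_ind (j : 'I_N) : int := (a j != 1)%:R.

(* Every autocorrelation value of a +-1 sequence is congruent to N mod 4:
   a(j) a(j+i) = 1 + 4 (x(j) x(j+i) - x(j)) + 2 (x(j) - x(j+i)), and the last
   terms sum to zero by shift invariance. *)
Lemma pacf_mod4 (i : nat) : (4 %| pacf a i - N%:R)%Z.
Proof.
pose x := neg_ind; pose s : 'I_N -> 'I_N := shift_idx i.
have term j : a j * a (s j) =
    1 + 4 * (x j * x (s j) - x j) + 2 * (x j - x (s j)).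
  by rewrite /x /neg_ind; case: (a_binary j) => ->; case: (a_binary (s j)) => ->.
rewrite /pacf (eq_bigr _ (fun j _ => term j)) !big_split /= -!mulr_sumr.
rewrite [X in 2 * X]sumrB (sum_shift i x) subrr mulr0 addr0 sumr_const card_ord.
by rewrite addrAC subrr add0r dvdz_mulr.
Qed.

End Autocorrelation.

Section PCSNecessary.
Variables (p N : nat) (a : 'I_p -> 'I_N -> int).
Hypothesis a_pcs : is_PCS a.

Lemma pcs_dvd4 : (1 < N)%N -> (4 %| p * N)%N.
Proof.
move=> N_gt1; have [a_bin a_comp] := a_pcs.
have dvd_sum : (4 %| \sum_k (pacf (a k) 1 - N%:R))%Z.
  by apply: rpred_sum => k _; apply: pacf_mod4.
rewrite sumrB a_comp // sumr_const card_ord add0r rpredN in dvd_sum.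
by move: dvd_sum; rewrite -mulrnA mulnC dvdzE !natz !absz_nat.
Qed.

(* Identity (2): only the shift-0 term survives in the sum over all shifts,
   so the squared entry sums of a PCS_p^N add up to p N. *)
Lemma pcs_sum_squares : \sum_k (\sum_j a k j) ^+ 2 = (p * N)%:R.
Proof.
have [a_bin a_comp] := a_pcs.
rewrite (eq_bigr _ (fun k _ => esym (sum_pacf (a k)))) exchange_big /=.
case: N a a_bin a_comp => [|n] b b_bin b_comp; first by rewrite big_ord0 muln0.
rewrite big_ord_recl [X in _ + X]big1 => [|i _]; last by apply: b_comp.
rewrite addr0 (eq_bigr _ (fun k _ => pacf0 (b_bin k))) sumr_const card_ord.
by rewrite -mulrnA mulnC.
Qed.

End PCSNecessary.

(* 60 is not a sum of three squares; each summand is below 8^2, so a finite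
   search decides it. *)
Lemma no_three_squares_60 (u v w : nat) : (u ^ 2 + v ^ 2 + w ^ 2 != 60)%N.
Proof.
apply/eqP => sum60.
have small t : (t ^ 2 <= 60)%N -> (t < 8)%N.
  by move=> t_le; rewrite -(@ltn_exp2r _ _ 2) // (leq_ltn_trans t_le).
have /small u_lt8 : (u ^ 2 <= 60)%N by rewrite -sum60 -addnA leq_addr.
have /small v_lt8 : (v ^ 2 <= 60)%N by rewrite -sum60 addnAC leq_addl.
have /small w_lt8 : (w ^ 2 <= 60)%N by rewrite -sum60 leq_addl.
have no_small_sol : all (fun u => all (fun v => all (fun w =>
  (u ^ 2 + v ^ 2 + w ^ 2 != 60)%N) (iota 0 8)) (iota 0 8)) (iota 0 8) by [].
move/allP/(_ u): no_small_sol; rewrite mem_iota u_lt8 => /(_ isT)/allP/(_ v).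
rewrite mem_iota v_lt8 => /(_ isT)/allP/(_ w); rewrite mem_iota w_lt8.
by rewrite sum60 => /(_ isT).
Qed.

Lemma sum_three_squares_ne60 (x : 'I_3 -> int) : \sum_k x k ^+ 2 != 60.
Proof.
have sqr_nat (m : int) : m ^+ 2 = (`|m| ^ 2)%N%:Z.
  by rewrite -abszX gez0_abs // sqr_ge0.
rewrite !big_ord_recl big_ord0 addr0 !sqr_nat -!PoszD addnA.
exact: no_three_squares_60.
Qed.

Lemma pcs3_necessary (N : nat) (a : 'I_3 -> 'I_N -> int) :
  (0 < N)%N -> is_PCS a -> ((N == 1) || (4 %| N) && (N != 20))%N.
Proof.
move=> N_gt0 a_pcs; case: (ltngtP N 1) => [| N_gt1 | -> //].
  by rewrite ltnNge N_gt0.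
apply/andP; split.
  by rewrite -(@Gauss_dvdr 4 3) // (pcs_dvd4 a_pcs).
apply/eqP => N20; move: a a_pcs; rewrite N20 => a a_pcs.
by move/eqP: (sum_three_squares_ne60 (fun k => \sum_j a k j)); rewrite pcs_sum_squares.
Qed.

Lemma pcs3_lengths_upto50 (N : nat) : (1 <= N <= 50)%N ->
  ((N == 1) || (4 %| N) && (N != 20))%N ->
  N \in [:: 1; 4; 8; 12; 16; 24; 28; 32; 36; 40; 44; 48]%N.
Proof.
have by_inspection : all (fun n => ((n == 1) || (4 %| n) && (n != 20)) ==>
  (n \in [:: 1; 4; 8; 12; 16; 24; 28; 32; 36; 40; 44; 48]))%N (iota 1 50) by [].
move=> N_range; move/allP/(_ N): by_inspection.
by rewrite mem_iota => /(_ N_range)/implyP.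
Qed.

(* Sum of a list, by a fold, so that the checker below computes. *)
Definition sumz (r : seq int) : int := foldr +%R 0 r.

Lemma sumz_big (r : seq nat) (F : nat -> int) : sumz (map F r) = \sum_(i <- r) F i.
Proof. by elim: r => [|x r IH] /=; rewrite ?big_nil ?big_cons ?IH. Qed.

(* The family read off a list of rows (out-of-range entries default to 0). *)
Definition table (p N : nat) (s : seq (seq int)) (k : 'I_p) (j : 'I_N) : int :=
  nth 0 (nth [::] s k) j.
Arguments table : clear implicits.

Definition table_pacf_sum (p N : nat) (s : seq (seq int)) (i : nat) : int :=
  sumz [seq sumz [seq nth 0 (nth [::] s k) j * nth 0 (nth [::] s k) ((i + j) %% N)
                 | j <- iota 0 N] | k <- iota 0 p].

Definition pcs_check (p N : nat) (s : seq (seq int)) : bool :=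
  [&& size s == p,
      all (fun row => (size row == N) && all (fun x => (x == 1) || (x == -1)) row) s
    & all (fun i => table_pacf_sum p N s i == 0) (iota 1 N.-1)].

Lemma table_pacf_sumE (p N : nat) (s : seq (seq int)) (i : nat) :
  table_pacf_sum p N s i = \sum_(k < p) pacf (table p N s k) i.
Proof.
have iotaE n : iota 0 n = index_iota 0 n by rewrite /index_iota subn0.
rewrite /table_pacf_sum sumz_big iotaE big_mkord; apply: eq_bigr => k _.
by rewrite sumz_big iotaE big_mkord.
Qed.

Lemma pcs_check_sound (p N : nat) (s : seq (seq int)) :
  pcs_check p N s -> is_PCS (table p N s).
Proof.
case/and3P => /eqP size_s /allP rows_ok /allP sums_ok; split.
  move=> k j; rewrite /table; have k_lt : (k < size s)%N by rewrite size_s.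
  have /andP [/eqP size_row /allP entries_ok] := rows_ok _ (mem_nth [::] k_lt).
  have j_lt : (j < size (nth [::] s k))%N by rewrite size_row.
  by case/orP: (entries_ok _ (mem_nth 0 j_lt)) => /eqP ->; [left | right].
move=> i i_gt0 i_ltN; rewrite -table_pacf_sumE; apply/eqP/sums_ok.
by rewrite mem_iota i_gt0 add1n prednK // (ltn_trans i_gt0).
Qed.

Definition pcs3_certificates : seq (nat * seq (seq int)) :=
  [:: (1%N,
        [:: [:: 1];
            [:: 1];
            [:: 1]]);
      (4%N,
        [:: [:: 1; 1; 1; -1];
            [:: 1; -1; -1; -1];
            [:: 1; 1; 1; -1]]);
      (8%N,
        [:: [:: 1; 1; 1; 1; 1; -1; 1; -1];
            [:: 1; 1; -1; -1; -1; 1; -1; -1];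
            [:: 1; -1; 1; -1; -1; -1; -1; 1]]);
      (12%N,
        [:: [:: -1; -1; 1; -1; -1; -1; 1; -1; 1; -1; -1; 1];
            [:: 1; -1; -1; 1; 1; 1; 1; 1; 1; -1; 1; -1];
            [:: 1; -1; -1; -1; -1; -1; 1; 1; 1; -1; -1; 1]]);
      (16%N,
        [:: [:: 1; -1; -1; -1; -1; -1; 1; -1; -1; 1; -1; -1; 1; 1; 1; -1];
            [:: -1; 1; 1; -1; -1; -1; -1; -1; -1; 1; -1; 1; 1; 1; -1; -1];
            [:: -1; 1; 1; 1; -1; 1; 1; 1; -1; -1; 1; -1; 1; 1; -1; 1]]);
      (24%N,
        [:: [:: 1; -1; 1; -1; 1; 1; -1; -1; 1; -1; -1; -1; 1; 1; 1; 1; 1; 1; -1; 1; 1;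
                1; 1; -1];
            [:: 1; 1; 1; -1; -1; -1; 1; -1; -1; -1; -1; -1; 1; 1; -1; -1; 1; -1; -1; 1;
                -1; -1; 1; -1];
            [:: 1; 1; -1; -1; -1; -1; -1; -1; 1; 1; 1; -1; 1; -1; 1; 1; -1; 1; -1; 1;
                1; -1; -1; 1]]);
      (28%N,
        [:: [:: 1; -1; -1; 1; 1; 1; 1; 1; 1; -1; 1; -1; 1; -1; -1; -1; -1; 1; -1; 1;
                -1; -1; -1; -1; 1; 1; -1; -1];
            [:: -1; 1; -1; -1; -1; -1; -1; 1; 1; -1; -1; 1; 1; -1; -1; -1; -1; -1; 1;
                1; 1; 1; -1; -1; 1; 1; -1; 1];
            [:: 1; -1; -1; -1; -1; 1; 1; -1; 1; -1; 1; -1; -1; -1; 1; -1; -1; 1; 1; -1;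
                1; -1; -1; 1; -1; -1; -1; -1]]);
      (32%N,
        [:: [:: 1; 1; 1; 1; 1; -1; 1; 1; -1; 1; 1; 1; -1; -1; -1; -1; 1; -1; 1; 1; -1;
                -1; 1; -1; 1; -1; -1; -1; 1; 1; 1; -1];
            [:: 1; 1; 1; -1; 1; -1; -1; 1; 1; 1; -1; 1; 1; 1; 1; 1; 1; 1; -1; -1; -1;
                -1; 1; -1; 1; 1; 1; 1; -1; -1; 1; -1];
            [:: 1; -1; -1; 1; 1; 1; 1; 1; -1; -1; 1; 1; -1; 1; -1; 1; 1; 1; -1; 1; 1;
                -1; 1; -1; 1; -1; -1; 1; -1; -1; -1; 1]]);
      (36%N,
        [:: [:: -1; -1; 1; 1; 1; 1; -1; 1; -1; 1; -1; 1; 1; -1; 1; 1; 1; -1; 1; 1; -1;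
                1; 1; 1; 1; 1; 1; 1; -1; -1; -1; -1; 1; 1; 1; -1];
            [:: 1; -1; 1; 1; 1; 1; -1; -1; 1; -1; -1; 1; -1; 1; -1; -1; 1; 1; -1; 1;
                -1; -1; -1; -1; -1; -1; 1; 1; 1; 1; 1; -1; 1; -1; 1; 1];
            [:: 1; -1; 1; 1; 1; -1; 1; 1; -1; -1; 1; -1; -1; -1; 1; -1; -1; -1; 1; 1;
                1; -1; -1; 1; 1; -1; -1; -1; 1; -1; 1; -1; -1; 1; -1; 1]]);
      (40%N,
        [:: [:: 1; 1; -1; -1; -1; 1; 1; 1; -1; 1; 1; 1; 1; 1; 1; -1; 1; -1; -1; 1; 1;
                -1; 1; 1; 1; -1; -1; -1; 1; -1; -1; -1; -1; -1; -1; 1; -1; 1; 1; -1];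
            [:: 1; -1; -1; 1; 1; -1; 1; -1; -1; -1; -1; 1; -1; -1; 1; -1; 1; -1; -1; 1;
                1; -1; -1; -1; 1; 1; 1; 1; -1; -1; -1; -1; -1; -1; 1; -1; 1; -1; -1; -1];
            [:: 1; -1; 1; 1; 1; -1; -1; 1; -1; -1; 1; 1; -1; -1; -1; -1; 1; 1; 1; 1;
                -1; 1; 1; 1; 1; -1; -1; 1; -1; 1; -1; 1; -1; 1; -1; -1; 1; -1; 1; 1]]);
      (44%N,
        [:: [:: 1; -1; -1; 1; 1; -1; -1; 1; 1; -1; 1; -1; -1; -1; -1; 1; -1; 1; 1; -1;
                1; 1; 1; -1; -1; -1; 1; -1; 1; -1; 1; 1; 1; -1; -1; 1; -1; -1; -1; -1;
                1; 1; -1; -1];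
            [:: -1; -1; -1; 1; -1; -1; -1; -1; 1; -1; 1; -1; 1; 1; -1; -1; 1; 1; 1; 1;
                1; 1; 1; 1; 1; 1; 1; -1; -1; 1; -1; 1; 1; 1; -1; 1; -1; 1; 1; 1; 1; 1;
                1; -1];
            [:: -1; -1; -1; 1; -1; 1; 1; 1; 1; -1; -1; 1; -1; -1; 1; -1; 1; -1; -1; 1;
                -1; -1; 1; 1; 1; 1; -1; -1; -1; 1; -1; 1; -1; -1; -1; 1; 1; -1; -1; -1;
                1; 1; -1; 1]]);
      (48%N,
        [:: [:: 1; -1; 1; -1; -1; -1; 1; -1; 1; -1; -1; -1; 1; -1; 1; -1; 1; -1; -1; 1;
                -1; -1; -1; -1; -1; -1; 1; 1; -1; -1; -1; -1; -1; 1; -1; -1; 1; 1; 1;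
                1; 1; 1; 1; -1; -1; 1; -1; 1];
            [:: -1; -1; -1; -1; -1; -1; 1; -1; 1; 1; -1; 1; -1; -1; -1; 1; 1; -1; -1;
                1; -1; -1; -1; -1; -1; 1; 1; 1; -1; 1; -1; 1; 1; -1; -1; -1; -1; 1; 1;
                -1; 1; 1; 1; -1; -1; 1; -1; 1];
            [:: 1; -1; 1; -1; -1; -1; 1; -1; 1; 1; -1; 1; -1; 1; 1; 1; 1; 1; 1; 1; -1;
                -1; -1; 1; 1; -1; 1; -1; -1; 1; 1; -1; -1; -1; 1; -1; -1; 1; 1; -1; -1;
                1; 1; 1; -1; -1; 1; 1]])].

Lemma pcs3_certificates_valid :
  all (fun c => pcs_check 3 c.1 c.2) pcs3_certificates.
Proof. by vm_compute. Qed.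

Lemma pcs3_certified_lengths :
  map fst pcs3_certificates = [:: 1; 4; 8; 12; 16; 24; 28; 32; 36; 40; 44; 48]%N.
Proof. by []. Qed.

Lemma pcs3_exists_of_certificate (N : nat) : N \in map fst pcs3_certificates ->
  exists a : 'I_3 -> 'I_N -> int, is_PCS a.
Proof.
case/mapP => [[M s] cert_in /= ->]; exists (table 3 M s); apply: pcs_check_sound.
exact: (allP pcs3_certificates_valid _ cert_in).
Qed.

Theorem proposition3 (N : nat) :
  (1 <= N <= 50)%N ->
  ((exists a : 'I_3 -> 'I_N -> int, is_PCS a) <->
   N \in [:: 1; 4; 8; 12; 16; 24; 28; 32; 36; 40; 44; 48]%N).
Proof.
move=> N_range; split => [[a a_pcs] | N_listed].
  apply: pcs3_lengths_upto50 => //; apply: pcs3_necessary a_pcs.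
  by case/andP: N_range.
by apply: pcs3_exists_of_certificate; rewrite pcs3_certified_lengths.
Qed.
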